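(* If $\mathcal{M}_\times\perp\mathsf{L}E$, then also $\mathcal{M}_\Sigma\perp\mathsf{L}E$.
   Context: $\mathcal{E}$ is a locally cartesian closed category with a dominance: a class of monos (the $\Sigma$-monos) closed under pullback, identities and composition, classified by $\top:1\to\Sigma$. $\mathsf{L}E=\sum_{\phi:\Sigma}E^\phi$ is the associated partial map classifier: maps $X\to\mathsf{L}E$ correspond to pairs of a $\Sigma$-mono $U\to X$ and a map $U\to E$. For a mono $m:I\to J$, $m\perp E$ means every map $I\to E$ extends uniquely along $m$; $\mathcal{N}\perp E$ means $m\perp E$ for all $m\in\mathcal{N}$. Given a class $\mathcal{M}$ of monos, $\mathcal{M}_\times$ is the smallest class of monos containing $\mathcal{M}$ and stable under products (with arbitrary objects), and $\mathcal{M}_\Sigma$ is the smallest class of monos containing $\mathcal{M}_\times$ and stable under pullback along $\Sigma$-monos. *)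

Set Implicit Arguments.
Unset Strict Implicit.

Record Category := {
  Ob :> Type;
  Hom : Ob -> Ob -> Type;
  cid : forall X, Hom X X;
  comp : forall X Y Z, Hom Y Z -> Hom X Y -> Hom X Z;
  comp_id_l : forall X Y (f : Hom X Y), comp (cid Y) f = f;
  comp_id_r : forall X Y (f : Hom X Y), comp f (cid X) = f;
  comp_assoc : forall X Y Z W (h : Hom Z W) (g : Hom Y Z) (f : Hom X Y),
      comp h (comp g f) = comp (comp h g) f
}.

Arguments Hom {C} X Y : rename.
Arguments cid {C} X : rename.
Arguments comp {C X Y Z} g f : rename.
Notation "g \o f" := (comp g f) (at level 40, left associativity).

Section Defs.
Variable C : Category.

Definition mclass := forall X Y : C, Hom X Y -> Prop.

Definition is_mono (X Y : C) (m : Hom X Y) : Prop :=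
  forall Z (a b : Hom Z X), m \o a = m \o b -> a = b.

Definition is_terminal (T : C) : Prop :=
  forall X : C, exists! t : Hom X T, True.

Definition is_pullback (A B K : C) (f : Hom A K) (g : Hom B K)
    (P : C) (p1 : Hom P A) (p2 : Hom P B) : Prop :=
  f \o p1 = g \o p2 /\
  forall Z (a : Hom Z A) (b : Hom Z B), f \o a = g \o b ->
    exists! h : Hom Z P, p1 \o h = a /\ p2 \o h = b.

Definition is_product (A B P : C) (p1 : Hom P A) (p2 : Hom P B) : Prop :=
  forall Z (a : Hom Z A) (b : Hom Z B),
    exists! h : Hom Z P, p1 \o h = a /\ p2 \o h = b.

Definition has_terminal : Prop := exists T : C, is_terminal T.

Definition has_pullbacks : Prop :=
  forall (A B K : C) (f : Hom A K) (g : Hom B K),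
    exists (P : C) (p1 : Hom P A) (p2 : Hom P B), is_pullback f g p1 p2.

(** Dependent products Pi_f (right adjoint to pullback along f : A -> B),
    stated through their universal property: for p : Y -> A there is
    q : P -> B together with an evaluation map ev : f^*P -> Y over A such that
    every h : f^*Z -> Y over A (for r : Z -> B) factors uniquely. *)
Definition has_dependent_products : Prop :=
  forall (A B : C) (f : Hom A B) (Y : C) (p : Hom Y A),
  exists (P : C) (q : Hom P B) (Q : C) (q1 : Hom Q P) (q2 : Hom Q A)
         (ev : Hom Q Y),
    is_pullback q f q1 q2 /\ p \o ev = q2 /\
    forall (Z : C) (r : Hom Z B) (W : C) (w1 : Hom W Z) (w2 : Hom W A)
           (h : Hom W Y),
      is_pullback r f w1 w2 -> p \o h = w2 ->
      exists! k : Hom Z P,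
        q \o k = r /\
        forall t : Hom W Q, q1 \o t = k \o w1 -> q2 \o t = w2 -> ev \o t = h.

Definition is_lccc : Prop :=
  has_terminal /\ has_pullbacks /\ has_dependent_products.

Definition is_dominance (D : mclass) (One Sig : C) (top : Hom One Sig) : Prop :=
  (forall X Y (m : Hom X Y), D X Y m -> is_mono m) /\
  (forall (A B K : C) (m : Hom A K) (g : Hom B K) (P : C)
          (p1 : Hom P A) (p2 : Hom P B),
      D A K m -> is_pullback m g p1 p2 -> D P B p2) /\
  (forall X : C, D X X (cid X)) /\
  (forall X Y Z (m : Hom X Y) (n : Hom Y Z), D X Y m -> D Y Z n -> D X Z (n \o m)) /\
  is_terminal One /\ D One Sig top /\
  (forall U X (m : Hom U X), D U X m ->
     exists! chi : Hom X Sig,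
       exists t : Hom U One, is_pullback top chi t m).

(** LE (with generic partial map eta : E -> LE) is the partial map classifier
    of E for the dominance D: maps X -> LE correspond (by pullback of eta)
    to pairs of a D-mono U -> X and a map U -> E. *)
Definition is_partial_map_classifier (D : mclass) (E LE : C) (eta : Hom E LE) : Prop :=
  D E LE eta /\
  forall (X U : C) (u : Hom U X) (f : Hom U E), D U X u ->
    exists! chi : Hom X LE, is_pullback chi eta u f.

Definition orth (I J : C) (m : Hom I J) (E : C) : Prop :=
  forall f : Hom I E, exists! g : Hom J E, g \o m = f.

Definition orth_class (N : mclass) (E : C) : Prop :=
  forall I J (m : Hom I J), N I J m -> orth m E.

(** M_x : smallest class containing M and stable under products with
    arbitrary objects X (m : I -> J  gives  m x X : I x X -> J x X,
    for any choice of the products). *)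
Inductive Mtimes (M : mclass) : mclass :=
| Mtimes_base : forall I J (m : Hom I J), M I J m -> Mtimes M m
| Mtimes_prod : forall I J (m : Hom I J) (X P Q : C)
      (p1 : Hom P I) (p2 : Hom P X) (q1 : Hom Q J) (q2 : Hom Q X)
      (m' : Hom P Q),
    Mtimes M m -> is_product p1 p2 -> is_product q1 q2 ->
    q1 \o m' = m \o p1 -> q2 \o m' = p2 -> Mtimes M m'.

Inductive MSigma (D : mclass) (M : mclass) : mclass :=
| MSigma_base : forall I J (m : Hom I J), Mtimes M m -> MSigma D M m
| MSigma_pb : forall I J J' (m : Hom I J) (s : Hom J' J) (P : C)
      (p1 : Hom P I) (p2 : Hom P J'),
    MSigma D M m -> D J' J s -> is_pullback m s p1 p2 -> MSigma D M p2.

End Defs.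

(* Let s : J' -> J be a Sigma-mono and m : I -> J with m _|_ LE, and let
   p1 : P -> I, p2 : P -> J' be their pullback.  Call G : J -> LE supported
   on s when the partial map it classifies has its domain inside s.  Every
   g : J' -> LE extends, by "undefined outside J'", to a map supported on s;
   maps supported on a mono are determined by their restriction to it; and
   if G is supported on s then G m is supported on p1.  Extending f : P -> LE
   along the Sigma-mono p1 and then along m gives an extension along p2.  For
   uniqueness, extend two extensions g1, g2 of f to G1, G2 supported on s:
   then G1 m and G2 m are supported on p1 and both restrict to f, so they
   agree, hence G1 = G2 by m _|_ LE and g1 = g2. *)

Section PartialMapClassifier.

Variables (C : Category) (D : mclass C) (One Sig : C) (top : Hom One Sig).
Variables (E LE : C) (eta : Hom E LE).
Hypothesis dom : is_dominance D top.
Hypothesis pmc : is_partial_map_classifier D eta.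
Hypothesis pullbacks : has_pullbacks C.

(* Set only now, so that the variable D keeps all its arguments explicit. *)
Set Implicit Arguments.
Unset Strict Implicit.

Lemma is_pullback_sym (A B K : C) (f : Hom A K) (g : Hom B K) P
    (p1 : Hom P A) (p2 : Hom P B) :
  is_pullback f g p1 p2 -> is_pullback g f p2 p1.
Proof.
  intros [Hcomm Huniv]. split; [symmetry; exact Hcomm|].
  intros Z a b Hab. destruct (Huniv Z b a (eq_sym Hab)) as [h [[H1 H2] Hh]].
  exists h. split; [split; assumption|].
  intros h' [H1' H2']. apply Hh. split; assumption.
Qed.

Lemma dmono_pullback (A B K : C) (m : Hom A K) (g : Hom B K) P
    (p1 : Hom P A) (p2 : Hom P B) :
  D A K m -> is_pullback m g p1 p2 -> D P B p2.
Proof. destruct dom as [_ [Hpb _]]. exact (@Hpb A B K m g P p1 p2). Qed.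

Lemma dmono_is_mono X Y (m : Hom X Y) : D X Y m -> is_mono m.
Proof. destruct dom as [Hmono _]. exact (Hmono X Y m). Qed.

Lemma classifier_unique X V (G G' : Hom X LE) (v : Hom V X) (e : Hom V E) :
  is_pullback G eta v e -> is_pullback G' eta v e -> G = G'.
Proof.
  intros HG HG'. destruct pmc as [Deta Hclass].
  assert (Dv : D V X v) by exact (dmono_pullback Deta (is_pullback_sym HG)).
  destruct (Hclass X V v e Dv) as [chi [_ Hchi]].
  rewrite <- (Hchi G HG). exact (Hchi G' HG').
Qed.

Lemma classifier_restrict X X' V (G : Hom X LE) (s : Hom X' X)
    (v : Hom V X') (e : Hom V E) :
  is_mono s -> is_pullback G eta (s \o v) e -> is_pullback (G \o s) eta v e.
Proof.
  intros Hs [Hcomm Huniv]. split; [rewrite <- comp_assoc; exact Hcomm|].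
  intros Z a b Hab. rewrite <- comp_assoc in Hab.
  destruct (Huniv Z (s \o a) b Hab) as [c [[Hc1 Hc2] Hc]].
  exists c. split.
  - split; [apply Hs; rewrite comp_assoc; exact Hc1 | exact Hc2].
  - intros c' [H1 H2]. apply Hc.
    split; [rewrite <- comp_assoc, H1; reflexivity | exact H2].
Qed.

Definition supported_on J J' (G : Hom J LE) (s : Hom J' J) : Prop :=
  forall Z (a : Hom Z J) (b : Hom Z E),
    G \o a = eta \o b -> exists a' : Hom Z J', s \o a' = a.

Lemma supported_on_classifier J J' V (G : Hom J LE) (s : Hom J' J)
    (v : Hom V J') (e : Hom V E) :
  is_mono s -> supported_on G s ->
  is_pullback (G \o s) eta v e -> is_pullback G eta (s \o v) e.
Proof.
  intros Hs Hsupp [Hcomm Huniv]. split; [rewrite comp_assoc; exact Hcomm|].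
  intros Z a b Hab. destruct (Hsupp Z a b Hab) as [a' <-].
  rewrite comp_assoc in Hab.
  destruct (Huniv Z a' b Hab) as [c [[Hc1 Hc2] Hc]].
  exists c. split.
  - split; [rewrite <- comp_assoc, Hc1; reflexivity | exact Hc2].
  - intros c' [H1 H2]. apply Hc. split; [|exact H2].
    apply Hs. rewrite comp_assoc. exact H1.
Qed.

Lemma supported_on_eq J J' (G G' : Hom J LE) (s : Hom J' J) :
  is_mono s -> supported_on G s -> supported_on G' s ->
  G \o s = G' \o s -> G = G'.
Proof.
  intros Hs HG HG' Hrestr.
  destruct (pullbacks _ _ _ (G \o s) eta) as [V [v [e Hve]]].
  apply (@classifier_unique J V G G' (s \o v) e).
  - exact (supported_on_classifier Hs HG Hve).
  - rewrite Hrestr in Hve. exact (supported_on_classifier Hs HG' Hve).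
Qed.

Lemma extension_along_dmono J J' (s : Hom J' J) (g : Hom J' LE) :
  D J' J s -> exists G : Hom J LE, G \o s = g /\ supported_on G s.
Proof.
  intros Ds. destruct pmc as [Deta Hclass].
  destruct dom as [_ [_ [_ [Dcomp _]]]].
  destruct (pullbacks _ _ _ g eta) as [V [v [e Hve]]].
  assert (Dv : D V J' v) by exact (dmono_pullback Deta (is_pullback_sym Hve)).
  destruct (Hclass J V (s \o v) e (Dcomp _ _ _ _ _ Dv Ds)) as [G [HG _]].
  exists G. split.
  - apply (classifier_unique (classifier_restrict (dmono_is_mono Ds) HG) Hve).
  - intros Z a b Hab. destruct (proj2 HG Z a b Hab) as [c [[Hc _] _]].
    exists (v \o c). rewrite comp_assoc. exact Hc.
Qed.

Lemma supported_on_pullback I J J' P (G : Hom J LE) (s : Hom J' J)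
    (m : Hom I J) (p1 : Hom P I) (p2 : Hom P J') :
  supported_on G s -> is_pullback m s p1 p2 -> supported_on (G \o m) p1.
Proof.
  intros Hsupp [_ Hpb] Z a b Hab. rewrite <- comp_assoc in Hab.
  destruct (Hsupp Z (m \o a) b Hab) as [a' Ha'].
  destruct (Hpb Z a a' (eq_sym Ha')) as [c [[Hc _] _]].
  exists c. exact Hc.
Qed.

Lemma orth_pullback_dmono I J J' P (m : Hom I J) (s : Hom J' J)
    (p1 : Hom P I) (p2 : Hom P J') :
  orth m LE -> D J' J s -> is_pullback m s p1 p2 -> orth p2 LE.
Proof.
  intros Hm Ds Hpb f.
  assert (Dp1 : D P I p1) by exact (dmono_pullback Ds (is_pullback_sym Hpb)).
  assert (Hsquare : forall G : Hom J LE, (G \o s) \o p2 = (G \o m) \o p1).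
  { intros G. rewrite <- !comp_assoc, (proj1 Hpb). reflexivity. }
  destruct (extension_along_dmono f Dp1) as [F [HF _]].
  destruct (Hm F) as [G0 [HG0 _]].
  exists (G0 \o s). split; [rewrite Hsquare, HG0; exact HF|].
  intros g Hg.
  destruct (extension_along_dmono (G0 \o s) Ds) as [G1 [HG1 Hsupp1]].
  destruct (extension_along_dmono g Ds) as [G2 [HG2 Hsupp2]].
  assert (Hm12 : G1 \o m = G2 \o m).
  { apply (supported_on_eq (dmono_is_mono Dp1)).
    - exact (supported_on_pullback Hsupp1 Hpb).
    - exact (supported_on_pullback Hsupp2 Hpb).
    - rewrite <- !Hsquare, HG1, HG2, Hg, Hsquare, HG0. exact HF. }
  destruct (Hm (G1 \o m)) as [G [_ HG]].
  rewrite <- HG1, <- HG2, <- (HG G1 eq_refl), (HG G2 (eq_sym Hm12)).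
  reflexivity.
Qed.

End PartialMapClassifier.

Theorem mainTheorem13 (C : Category) (D : mclass C) (One Sig : C)
    (top : Hom One Sig) (E LE : C) (eta : Hom E LE) (M : mclass C) :
  is_lccc C ->
  is_dominance D top ->
  is_partial_map_classifier D eta ->
  (forall I J (m : Hom I J), M I J m -> is_mono m) ->
  orth_class (Mtimes M) LE ->
  orth_class (MSigma D M) LE.
Proof.
  intros [_ [pullbacks _]] dom pmc _ orthM I J m Hm.
  induction Hm as [I J m Hm | I J J' m s P p1 p2 _ IH Ds Hpb].
  - exact (orthM I J m Hm).
  - exact (orth_pullback_dmono dom pmc pullbacks IH Ds Hpb).
Qed.
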